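(* Let $G$ be a finite group and $p$ a prime. If $|G'\cap Z(G)|=p$ and $C_G(G')$ is non-abelian, then there is a positive integer $s$ such that $C_G(G')/Z(C_G(G'))\cong (C_p\times C_p)^s$ and $$\Pr(C_G(G'))=\frac{1}{p}\left(1+\frac{p-1}{p^{2s}}\right).$$
   Context: $G'$ is the commutator subgroup, $Z(\cdot)$ the center, $C_G(G')$ the centralizer of $G'$ in $G$. For a finite group $H$, $\Pr(H)=\frac{|\{(x,y)\in H\times H : xy=yx\}|}{|H|^2}$. $(C_p\times C_p)^s$ is the direct product of $s$ copies of $C_p\times C_p$. *)

From HB Require Import structures.
From mathcomp Require Import all_boot all_order all_algebra all_fingroup all_solvable.
Set Implicit Arguments. Unset Strict Implicit. Unset Printing Implicit Defensive.

Definition Cp_type (p : nat) : finGroupType := 'Z_p.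

Definition CpCp_pow_type (p s : nat) : finGroupType :=
  {dffun forall i : 'I_s, (Cp_type p * Cp_type p)%type}.

Definition CpCp_pow (p s : nat) : {group CpCp_pow_type p s} := [set: CpCp_pow_type p s]%G.

Definition comm_prob (gT : finGroupType) (H : {set gT}) : rat :=
  (#|[set xy in setX H H | (xy.1 * xy.2 == xy.2 * xy.1)%g]|%:R / (#|H| ^ 2)%:R)%R.

From HB Require Import structures.
From mathcomp Require Import all_boot all_order all_algebra all_fingroup all_solvable.
From mathcomp Require Import ring.
Set Implicit Arguments. Unset Strict Implicit. Unset Printing Implicit Defensive.

Import GRing.Theory Num.Theory.

(* Put C := C_G(G'). The three subgroup lemma gives C' <= G' :&: Z(G), so C has
   class at most 2 and |C'| divides p. In such a group z |-> [y, z] is a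
   homomorphism into C' with kernel C_C[y], so every noncentral element has a
   centraliser of index exactly p. For noncommuting x, y the subgroup
   R := C_C[x] :&: C_C[y] has index p^2 and Z(R) = Z(C), so by induction
   |C : Z(C)| is an even power of p. As C/Z(C) has exponent p it is
   (C_p x C_p)^s, and counting commuting pairs through centraliser orders gives
   Pr(C) = (|Z(C)| |C| + (|C| - |Z(C)|) |C|/p) / |C|^2. *)

Open Scope group_scope.

Lemma prime_indexg_intermediate (gT : finGroupType) (A B D : {group gT}) b :
  A \subset B -> B \subset D -> prime #|D : A| -> b \in B -> b \notin A ->
  D \subset B.
Proof.
move=> sAB sBD prDA Bb nAb.
have ntBA : #|B : A| != 1%N.
  by rewrite indexg_eq1; apply: contra nAb => /subsetP; apply.
have dvBA : #|B : A| %| #|D : A| by rewrite -(Lagrange_index sBD sAB) dvdn_mull.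
have eBA := prime_nt_dvdP prDA ntBA dvBA.
rewrite -indexg_eq1 -(eqn_pmul2r (indexg_gt0 B A)) mul1n.
by rewrite Lagrange_index // eBA.
Qed.

Section ClassTwoPrimeDerived.

Variables (gT : finGroupType) (p : nat) (H : {group gT}).
Hypotheses (pr_p : prime p) (oH'p : #|H^`(1)| %| p) (sH'Z : H^`(1) \subset 'Z(H)).

Lemma der1_commute c h : c \in H^`(1) -> h \in H -> commute c h.
Proof. by move=> /(subsetP sH'Z)/centerP[_ cH] /cH. Qed.

Lemma indexg_subcent1 (K : {group gT}) y :
  K \subset H -> y \in H -> ~~ (K \subset 'C[y]) -> #|K : 'C_K[y]| = p.
Proof.
move=> sKH Hy nKy.
have yK_H' z : z \in K -> [~ y, z] \in H^`(1).
  by move=> Kz; rewrite derg1 mem_commg // (subsetP sKH).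
have commM : {in K &, {morph commg y : a b / a * b}}.
  move=> a b Ka Kb; have Hb := subsetP sKH b Kb.
  have H'ya := yK_H' a Ka.
  rewrite commgMJ /conjg (der1_commute H'ya Hb) mulKg.
  by rewrite (der1_commute H'ya (subsetP (der_sub 1 H) _ (yK_H' b Kb))).
pose f := Morphism commM.
have kerf : 'C_K[y] = 'ker f.
  apply/setP=> z; rewrite inE (sameP cent1P commgP) !inE.
  by rewrite -invg_comm eq_invg1.
have sfKH' : f @* K \subset H^`(1).
  by apply/subsetP=> _ /morphimP[z _ Kz ->]; apply: yK_H'.
have : #|f @* K| %| p by apply: dvdn_trans (cardSg sfKH') oH'p.
rewrite card_morphim setIid -kerf; apply/(prime_nt_dvdP pr_p).
by rewrite indexg_eq1; apply: contra nKy => /subset_trans; apply; apply: subsetIr.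
Qed.

Section TwoNoncommutingElements.

Variables x y : gT.
Hypotheses (Hx : x \in H) (Hy : y \in H) (nCxy : y \notin 'C[x]).

Let indexHCx : #|H : 'C_H[x]| = p.
Proof. by rewrite (indexg_subcent1 (subxx H) Hx) //; apply/subsetPn; exists y. Qed.

Let indexCxCy : #|'C_H[x] : 'C_('C_H[x])[y]| = p.
Proof.
rewrite (indexg_subcent1 (subsetIl _ _) Hy) //.
by apply/subsetPn; exists x; [rewrite inE Hx cent1id | rewrite cent1C].
Qed.

Lemma indexg_subcent2 : #|H : 'C_('C_H[x])[y]| = (p ^ 2)%N.
Proof.
by rewrite -(Lagrange_index (subsetIl H 'C[x]) (subsetIl _ 'C[y])) indexHCx indexCxCy.
Qed.

Lemma center_subcent2 : 'Z('C_('C_H[x])[y]) = 'Z(H).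
Proof.
set K := 'C_H[x]; set R := 'C_K[y].
have sKH : K \subset H := subsetIl _ _.
have sRK : R \subset K := subsetIl _ _.
have sRH := subset_trans sRK sKH.
have xK : x \in K by rewrite inE Hx cent1id.
have xR : x \notin R by rewrite inE xK cent1C.
have yK : y \notin K by rewrite inE Hy.
have prHK : prime #|H : K| by rewrite indexHCx.
have prKR : prime #|K : R| by rewrite indexCxCy.
have sZR : 'Z(H) \subset R.
  apply/subsetP=> z /centerP[Hz cHz]; rewrite !in_setI Hz.
  by apply/andP; split; apply/cent1P; apply: cHz.
apply/eqP; rewrite eqEsubset andbC subsetI sZR.
rewrite (subset_trans (subsetIr _ _) (centS sRH)) /=.
apply/subsetP=> z /centerP[Rz cRz].
have sRCz : R \subset 'C_K[z].
  by apply/subsetP=> w Rw; rewrite inE (subsetP sRK) //; apply/cent1P/esym/cRz.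
have xCz : x \in 'C_K[z].
  by rewrite inE xK; apply/cent1P; have /setIP[/setIP[_ /cent1P]] := Rz.
have sKCz := prime_indexg_intermediate sRCz (subsetIl _ _) prKR xCz xR.
have sKHz : K \subset 'C_H[z].
  apply/subsetP=> w Kw; rewrite inE (subsetP sKH) //.
  by have /setIP[] := subsetP sKCz w Kw.
have yCz : y \in 'C_H[z].
  by rewrite inE Hy; apply/cent1P; have /setIP[_ /cent1P] := Rz.
have sHCz := prime_indexg_intermediate sKHz (subsetIl _ _) prHK yCz yK.
apply/centerP; split=> [|w Hw]; first exact: (subsetP sRH).
by have /setIP[_ /cent1P] := subsetP sHCz w Hw.
Qed.

End TwoNoncommutingElements.

Lemma abelem_quotient_center : p.-abelem (H / 'Z(H)).
Proof.
apply/abelemP => //; split; first exact: sub_der1_abelian.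
move=> _ /morphimP[x Nx Hx ->]; rewrite -morphX //; apply: coset_id.
apply/centerP; split=> [|w Hw]; first by rewrite groupX.
have H'xw : [~ x, w] \in H^`(1) by rewrite derg1 mem_commg.
apply/commgP; rewrite commXg; last exact/esym/der1_commute.
by rewrite -order_dvdn (dvdn_trans (order_dvdG H'xw)).
Qed.

Lemma sum_card_subcent1 :
  (p * \sum_(x in H) #|'C_H[x]|)%N =
    (#|'Z(H)| * (p * #|H|) + (#|H| - #|'Z(H)|) * #|H|)%N.
Proof.
rewrite big_distrr /= (big_setID 'Z(H)) /= (setIidPr (center_sub H)).
rewrite (eq_bigr (fun=> p * #|H|)%N) => [|x /setIP[_ cHx]]; last first.
  by rewrite (setIidPl _) // sub_cent1.
rewrite [X in (_ + X)%N](eq_bigr (fun=> #|H|)) => [|x /setDP[Hx nZx]]; last first.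
  have nHCx : ~~ (H \subset 'C[x]).
    by rewrite sub_cent1; apply: contra nZx => cHx; apply/setIP.
  by rewrite -(Lagrange (subsetIl H 'C[x])) (indexg_subcent1 (subxx H) Hx) // mulnC.
by rewrite !sum_nat_const cardsDS // center_sub.
Qed.

End ClassTwoPrimeDerived.

Lemma index_center_even_pow (gT : finGroupType) (p : nat) (H : {group gT}) :
  prime p -> #|H^`(1)| %| p -> H^`(1) \subset 'Z(H) ->
  exists n, #|H : 'Z(H)| = (p ^ (2 * n))%N.
Proof.
move=> pr_p; have [m leHm] := ubnP #|H|.
elim: m H leHm => // m IHm H leHm oH'p sH'Z.
have [abH | ] := boolP (abelian H).
  by exists 0%N; rewrite (center_idP abH) indexgg.
case/subsetPn=> x Hx; rewrite -sub_cent1 => /subsetPn[y Hy nCxy].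
set R := 'C_('C_H[x])[y].
have sRH : R \subset H := subset_trans (subsetIl _ _) (subsetIl _ _).
have iHR := indexg_subcent2 pr_p oH'p sH'Z Hx Hy nCxy.
have ZR := center_subcent2 pr_p oH'p sH'Z Hx Hy nCxy.
have [n iR] : exists n, #|R : 'Z(R)| = (p ^ (2 * n))%N.
  apply: IHm; last by rewrite ZR (subset_trans (dergS 1 sRH)).
    rewrite -ltnS (leq_trans _ leHm) // ltnS -(Lagrange sRH) iHR ltn_Pmulr //.
    by rewrite (ltn_exp2l 0) ?prime_gt1.
  exact: dvdn_trans (cardSg (dergS 1 sRH)) oH'p.
exists n.+1; rewrite -ZR -(Lagrange_index sRH (center_sub R)) iHR iR.
by rewrite -expnD mulnS.
Qed.

Lemma card_commuting_pairs (gT : finGroupType) (H : {set gT}) :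
  #|[set xy in setX H H | xy.1 * xy.2 == xy.2 * xy.1]| =
    (\sum_(x in H) #|'C_H[x]|)%N.
Proof.
rewrite -sum1dep_card.
rewrite (eq_bigl (fun u => (u.1 \in H) && ((u.2 \in H) && (u.1 * u.2 == u.2 * u.1))));
  last by move=> [a b]; rewrite inE /= andbA.
transitivity (\sum_(x in H) \sum_(y | (y \in H) && (x * y == y * x)%g) 1)%N.
  by rewrite pair_big_dep.
apply: eq_bigr => x Hx; rewrite sum1dep_card.
by apply: eq_card => y; rewrite inE in_setI; congr (_ && _); apply/eqP/cent1P => /esym.
Qed.

Lemma comm_prob_index_center (gT : finGroupType) (p : nat) (H : {group gT}) :
  prime p -> #|H^`(1)| %| p -> H^`(1) \subset 'Z(H) ->
  comm_prob H = (1 / p%:R * (1 + (p%:R - 1) / #|H : 'Z(H)|%:R) : rat)%R.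
Proof.
move=> pr_p oH'p sH'Z; rewrite /comm_prob card_commuting_pairs.
have oH : (#|'Z(H)| * #|H : 'Z(H)|)%N = #|H| := Lagrange (center_sub H).
have sum_pairs := sum_card_subcent1 pr_p oH'p sH'Z.
set N := (\sum_(x in H) _)%N in sum_pairs *.
have leZH : #|'Z(H)| <= #|H| by rewrite subset_leq_card ?center_sub.
have p_neq0 : (p%:R != 0 :> rat)%R by rewrite pnatr_eq0 -lt0n prime_gt0.
have NE : (N%:R = (#|'Z(H)|%:R * (p%:R * #|H|%:R)
                   + (#|H|%:R - #|'Z(H)|%:R) * #|H|%:R) / p%:R :> rat)%R.
  by rewrite -natrB // -!natrM -natrD -sum_pairs natrM mulrC mulKf.
rewrite NE -oH natrX natrM; field.
by rewrite p_neq0 !pnatr_eq0 -!lt0n cardG_gt0 indexg_gt0.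
Qed.

Lemma der1_cent_der1_sub (gT : finGroupType) (G : {group gT}) :
  'C_G(G^`(1))^`(1) \subset G^`(1) :&: 'Z(G).
Proof.
set C := 'C_G(G^`(1)).
have sCG : C \subset G := subsetIl _ _.
have cCCG : [~: C, G, C] = 1.
  apply/commG1P; rewrite (subset_trans (commgSS sCG (subxx G))) //.
  by rewrite -derg1 centsC subsetIr.
rewrite subsetI (dergS 1 sCG) /center subsetI (subset_trans (der_sub 1 C) sCG) /=.
apply/commG1P; rewrite derg1; apply: (three_subgroup cCCG).
by rewrite (commGC G).
Qed.

Lemma expg_pair (gT1 gT2 : finGroupType) (u : gT1 * gT2) n :
  u ^+ n = (u.1 ^+ n, u.2 ^+ n).
Proof. by elim: n => [|n IHn]; [case: u | rewrite !expgS IHn]. Qed.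

Lemma card_Cp p : prime p -> #|Cp_type p| = p.
Proof. by move=> pr_p; rewrite card_ord Zp_cast // prime_gt1. Qed.

Lemma card_CpCp_pow p s : prime p -> #|CpCp_pow p s| = (p ^ (2 * s))%N.
Proof.
by move=> pr_p; rewrite cardsT card_ffun card_prod card_Cp // card_ord expnM mulnn.
Qed.

Lemma abelem_CpCp_pow p s : prime p -> p.-abelem (CpCp_pow p s).
Proof.
move=> pr_p; have Cp_expp (a : Cp_type p) : a ^+ p = 1.
  by have := expg_cardG (in_setT a); rewrite cardsT card_Cp.
apply/abelemP => //; split=> [|x _].
  apply/centsP=> x _ y _; apply/ffunP=> i; rewrite !mulg_ffun.
  by case: (x i) (y i) => [a b] [c d]; congr pair; apply: Zp_mulgC.
apply/ffunP=> i; rewrite oneg_ffun.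
have -> : (x ^+ p) i = x i ^+ p := morphX (dffun_morphism _ i) p (in_setT x).
by rewrite expg_pair !Cp_expp.
Qed.

Theorem lemma3p1 (gT : finGroupType) (G : {group gT}) (p : nat) :
  prime p ->
  #|(G^`(1) :&: 'Z(G))%g| = p ->
  ~~ abelian ('C_G(G^`(1)))%g ->
  exists2 s : nat, 0 < s &
    (('C_G(G^`(1)) / 'Z('C_G(G^`(1))))%g \isog CpCp_pow p s) /\
    comm_prob ('C_G(G^`(1)))%g =
      (1 / p%:R * (1 + (p%:R - 1) / (p%:R ^+ (2 * s))) : rat)%R.
Proof.
move=> pr_p oZ0 nabC; set C := 'C_G(G^`(1)).
have sC'Z0 : C^`(1) \subset G^`(1) :&: 'Z(G) := der1_cent_der1_sub G.
have oC'p : #|C^`(1)| %| p by rewrite -oZ0 cardSg.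
have sC'Z : C^`(1) \subset 'Z(C).
  have cZGC : 'Z(G) \subset 'C(C) := subset_trans (subsetIr _ _) (centS (subsetIl _ _)).
  rewrite /center subsetI der_sub (subset_trans sC'Z0) //.
  exact: subset_trans (subsetIr _ _) cZGC.
have [n iC] := index_center_even_pow pr_p oC'p sC'Z.
have n_gt0 : 0 < n.
  rewrite lt0n; apply: contra nabC => /eqP n0.
  move: iC; rewrite n0 muln0 expn0 => /eqP; rewrite indexg_eq1 => sCZ.
  exact: subset_trans sCZ (subsetIr _ _).
have abelQ := abelem_quotient_center pr_p oC'p sC'Z.
exists n => //; split.
  have := isog_abelem_card (CpCp_pow p n) abelQ.
  rewrite abelem_CpCp_pow // card_CpCp_pow //.
  rewrite card_quotient ?normal_norm ?center_normal //.
  by rewrite iC eqxx; apply.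
by rewrite (comm_prob_index_center pr_p oC'p sC'Z) iC natrX.
Qed.
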